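(* There is an absolute constant $\epsilon_0>0$ such that every nonadaptive, $1$-sided error unateness tester for functions $f:\{0,1\}^d\to\{0,1\}$ with proximity parameter $\epsilon_0$ must make $\Omega(\sqrt d)$ queries.
   Context: A function $f:\{0,1\}^d\to\mathbb{R}$ is unate if each dimension $i\in[d]$ can be assigned a direction up or down such that: if up, $f(x)\le f(x+e_i)$ for all $x$ with $x_i=0$ (here $x+e_i$ is $x$ with the $i$-th bit set to 1); if down, $f(x)\ge f(x+e_i)$ for all such $x$. The distance between two functions is the fraction of points where they differ; $f$ is $\epsilon$-far from unate if its distance to every unate function is at least $\epsilon$. A unateness tester is a randomized algorithm that, given $\epsilon$ and oracle (query) access to $f$, accepts with probability at least $2/3$ if $f$ is unate and rejects with probability at least $2/3$ if $f$ is $\epsilon$-far from unate. It is nonadaptive if it chooses all its queries before seeing any answers, and has $1$-sided error if it accepts every unate function with probability $1$. *)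

From HB Require Import structures.
From mathcomp Require Import all_boot all_order all_algebra.
Set Implicit Arguments. Unset Strict Implicit. Unset Printing Implicit Defensive.
Import Order.TTheory GRing.Theory Num.Theory.

Definition cube (d : nat) := {ffun 'I_d -> bool}.

Definition setbit (d : nat) (x : cube d) (i : 'I_d) : cube d :=
  [ffun j => if j == i then true else x j].

Definition unate (d : nat) (f : cube d -> bool) : Prop :=
  exists dir : 'I_d -> bool,
    forall (i : 'I_d) (x : cube d), x i = false ->
      if dir i then (f x ==> f (setbit x i))
      else (f (setbit x i) ==> f x).

Definition dist (d : nat) (f g : cube d -> bool) : rat :=
  (#|[set x : cube d | f x != g x]|%:R / (2 ^ d)%:R)%R.

Definition far_from_unate (d : nat) (eps : rat) (f : cube d -> bool) : Prop :=
  forall g : cube d -> bool, unate g -> (eps <= dist f g)%R.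

(* A nonadaptive randomized tester with at most q queries, given as a
   probability distribution p (weights in an ordered field R) over a finite
   set Omega of random seeds; seed w fixes the query list Q w (chosen before
   any answer is seen) and a decision D w applied to the answers. *)
Definition accept_prob (R : realFieldType) (d : nat) (Omega : finType)
  (p : Omega -> R) (Q : Omega -> seq (cube d)) (D : Omega -> seq bool -> bool)
  (f : cube d -> bool) : R :=
  (\sum_(w : Omega | D w (map f (Q w))) p w)%R.

Definition is_distribution (R : realFieldType) (Omega : finType) (p : Omega -> R) :=
  (forall w, 0 <= p w)%R /\ (\sum_(w : Omega) p w = 1)%R.

Definition nonadaptive_1sided_unateness_tester (R : realFieldType) (d : nat)
  (eps : rat) (q : nat) (Omega : finType) (p : Omega -> R)
  (Q : Omega -> seq (cube d)) (D : Omega -> seq bool -> bool) : Prop :=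
  [/\ is_distribution p,
      (forall w, size (Q w) <= q)%N,
      (forall f, unate f -> accept_prob p Q D f = 1%R) &
      (forall f, far_from_unate eps f -> (accept_prob p Q D f <= 1 / 3)%R)].

From HB Require Import structures.
From mathcomp Require Import all_boot all_order all_algebra.
From mathcomp Require Import lra.
Import Order.TTheory GRing.Theory Num.Theory.
Set Implicit Arguments. Unset Strict Implicit. Unset Printing Implicit Defensive.

(* The hard functions are multiplexers mux_i(x) = (x_i ? x_a : x_b) for two
   other coordinates a, b; each is 1/8-far from unate.  A one-sided tester
   may reject mux_i on a query set S only if S contains a pair x, y with
   x_i = 1, y_i = 0 and x <= y on all other coordinates: otherwise the upward
   closure of mux_i restricted to S, for the order with coordinate i reversed,
   is a unate function agreeing with mux_i on S.  Such a pair determines i,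
   so a query set of size q is a witness for at most q^2 of the d multiplexers,
   and averaging the rejection probabilities (each >= 2/3) gives 2d/3 <= q^2. *)

Lemma card_cube d : #|cube d| = (2 ^ d)%N.
Proof. by rewrite card_ffun card_bool card_ord. Qed.

Lemma card_le_mul_of_cancel (T U V : finType) (A : {set U})
    (h : T -> U) (k : T -> V) (F : U * V -> T) :
  (forall x, h x \in A) -> cancel (fun x => (h x, k x)) F ->
  (#|T| <= #|A| * #|V|)%N.
Proof.
move=> hA hkK; rewrite -[#|V|]cardsT -cardsX.
rewrite -[#|T|]cardsT -(card_imset _ (can_inj hkK)).
apply/subset_leq_card/subsetP => _ /imsetP[x _ ->].
by rewrite in_setX hA in_setT.
Qed.

Definition upd d (x : cube d) (j : 'I_d) (b : bool) : cube d :=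
  [ffun k => if k == j then b else x k].

Lemma updE d (x : cube d) j b k : upd x j b k = if k == j then b else x k.
Proof. by rewrite ffunE. Qed.

Lemma setbitE d (x : cube d) i : setbit x i = upd x i true.
Proof. by []. Qed.

Section Multiplexer.

Variable n : nat.
Implicit Types (i : 'I_n.+3) (x y : cube n.+3).

Definition sel1 i : 'I_n.+3 := if i == ord0 then inord 1 else ord0.
Definition sel0 i : 'I_n.+3 := if i == inord 2 then inord 1 else inord 2.

Lemma sel_neq i : [/\ sel1 i != i, sel0 i != i & sel1 i != sel0 i].
Proof.
have v1 : val (inord 1 : 'I_n.+3) = 1%N by apply: inordK.
have v2 : val (inord 2 : 'I_n.+3) = 2%N by apply: inordK.
case: i => [[|[|[|k]]] lt_i];
  by rewrite /sel1 /sel0 -!val_eqE /= !(fun_if val) /= ?v1 ?v2.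
Qed.

Definition mux i x : bool := if x i then x (sel1 i) else x (sel0 i).

Lemma mux_disagree_on_edge i (g : cube n.+3 -> bool) (dir : 'I_n.+3 -> bool) x :
    (forall y, y i = false ->
       if dir i then g y ==> g (setbit y i) else g (setbit y i) ==> g y) ->
    x i = false -> x (sel1 i) = ~~ dir i -> x (sel0 i) = dir i ->
  (mux i x != g x) || (mux i (setbit x i) != g (setbit x i)).
Proof.
move=> /(_ x) g_mono xi x1 x0; move: (g_mono xi).
have [n1i _ _] := sel_neq i.
rewrite /mux xi setbitE !updE eqxx (negbTE n1i) x1 x0.
by case: (dir i); case: (g x); case: (g _).
Qed.

(* Pushing x onto the edge in direction i whose data bits are set against
   the direction of g yields a disagreement point h x, and x is recovered
   from h x and its three bits at i, sel1 i, sel0 i: at least 2^d / 8 points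
   disagree. *)
Lemma mux_far_from_unate i : far_from_unate (1 / 8) (mux i).
Proof.
move=> g [dir g_unate].
have [n1i n0i n10] := sel_neq i.
set Dis := [set x | mux i x != g x].
pose base x := upd (upd (upd x (sel1 i) (~~ dir i)) (sel0 i) (dir i)) i false.
pose h x := if mux i (base x) != g (base x) then base x else setbit (base x) i.
pose F (yb : cube n.+3 * (bool * bool * bool)) :=
  upd (upd (upd yb.1 (sel1 i) yb.2.1.1) (sel0 i) yb.2.1.2) i yb.2.2.
have hDis x : h x \in Dis.
  have := @mux_disagree_on_edge i g dir (base x) (g_unate i).
  rewrite /h !inE !updE !eqxx (negbTE n1i) (negbTE n0i) (negbTE n10).
  move=> /(_ erefl erefl erefl); by case: ifP.
have hK : cancel (fun x => (h x, (x (sel1 i), x (sel0 i), x i))) F.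
  move=> x; apply/ffunP => k; rewrite /F /h /base /=.
  by case: ifP => _; rewrite !updE; do 3 (case: eqP => [->|] //).
have := card_le_mul_of_cancel hDis hK.
rewrite card_cube !card_prod card_bool -(ler_nat rat) natrM.
rewrite /dist -/Dis ler_pdivlMr; last by rewrite ltr0n expn_gt0.
lra.
Qed.

End Multiplexer.

Section UpperExtension.

Variables (d : nat) (i : 'I_d).
Implicit Types (x y z : cube d) (S : seq (cube d)) (f : cube d -> bool).

Definition le_rev x y :=
  [forall j, if j != i then x j ==> y j else y j ==> x j].

Definition upper_ext f S z := has (fun x => le_rev x z && f x) S.

Lemma upper_ext_unate f S : unate (upper_ext f S).
Proof.
exists (fun j => j != i) => j z zj /=.
case: ifP => ji; apply/implyP => /hasP[x xS /andP[/forallP le_xz fx]];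
  apply/hasP; exists x => //; rewrite fx andbT; apply/forallP => k;
  move: (le_xz k); rewrite /setbit ffunE; case: (k =P j) => [->|//].
- by rewrite ji implybT.
- by move/negbFE/eqP: ji zj => -> ->; rewrite eqxx.
Qed.

Lemma upper_ext_agree f S :
    {in S &, forall x y, le_rev x y -> f x -> f y} ->
  map (upper_ext f S) S = map f S.
Proof.
move=> f_mono; apply/eq_in_map => y yS; apply/idP/idP.
- by case/hasP => x xS /andP[le_xy]; apply: f_mono.
- move=> fy; apply/hasP; exists y => //; rewrite fy andbT.
  by apply/forallP => k; case: ifP; rewrite implybb.
Qed.

Definition viol_pair x y :=
  [&& x i, ~~ y i & [forall j, (j != i) ==> (x j ==> y j)]].

End UpperExtension.

Lemma viol_pair_coord d (i j : 'I_d) (x y : cube d) :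
  viol_pair i x y -> x j -> ~~ y j -> j = i.
Proof.
case/and3P=> _ _ /forallP le_xy xj yj; apply/eqP/negPn/negP => ji.
by move: (le_xy j); rewrite ji xj (negbTE yj).
Qed.

Lemma card_viol_coords d (S : seq (cube d)) :
  (#|[set i | [exists x, exists y, [&& x \in S, y \in S & viol_pair i x y]]]|
     <= size S ^ 2)%N.
Proof.
set B := [set i | _].
have [->|[i0 _]] := set_0Vmem B; first by rewrite cards0.
pose coord (x y : cube d) := odflt i0 [pick j | x j && ~~ y j].
rewrite -mulnn -(size_allpairs coord); apply: leq_trans (card_size _).
apply/subset_leq_card/subsetP => i; rewrite inE.
case/existsP => x /existsP[y /and3P[xS yS viol]].
apply/allpairsP; exists (x, y); split => //=; rewrite /coord.
case: pickP => [j /andP[xj yj] | none] /=.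
  exact: esym (viol_pair_coord viol xj yj).
by case/and3P: viol => xi yi _; move: (none i); rewrite xi yi.
Qed.

Lemma mux_mono_no_viol n (i : 'I_n.+3) (x y : cube n.+3) :
  le_rev i x y -> ~~ viol_pair i x y -> mux i x -> mux i y.
Proof.
move=> /forallP le_xy; have [n1i n0i _] := sel_neq i.
move: (le_xy i) (le_xy (sel1 i)) (le_xy (sel0 i)).
rewrite /viol_pair /mux eqxx n1i n0i /=.
case: (x i); case: (y i) => //= _.
- by move=> le1 _ _; apply: (implyP le1).
- move=> _ _ /negP[]; apply/forallP => j; apply/implyP => ji.
  by move: (le_xy j); rewrite ji.
- by move=> _ le0 _; apply: (implyP le0).
Qed.

Section OneSidedTester.

Variables (R : realFieldType) (d : nat) (Omega : finType) (p : Omega -> R).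
Variables (Q : Omega -> seq (cube d)) (D : Omega -> seq bool -> bool).
Hypothesis p_distr : is_distribution p.
Local Open Scope ring_scope.

Definition reject_prob (f : cube d -> bool) : R :=
  \sum_(w | ~~ D w (map f (Q w))) p w.

Lemma accept_add_reject f : accept_prob p Q D f + reject_prob f = 1.
Proof.
by case: p_distr => _ <-; rewrite [RHS](bigID (fun w => D w (map f (Q w)))).
Qed.

Lemma accepts_on_support f w :
  accept_prob p Q D f = 1 -> p w != 0 -> D w (map f (Q w)).
Proof.
move=> acc1 pw; apply: contraNT pw => rej; have [p_ge0 _] := p_distr.
have /(psumr_eq0P (fun v _ => p_ge0 v))-> // : reject_prob f = 0.
  by apply: (addrI 1); rewrite -{1}acc1 accept_add_reject addr0.
Qed.

End OneSidedTester.

Section MuxLowerBound.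

Variables (R : realFieldType) (n q : nat) (Omega : finType) (p : Omega -> R).
Variables (Q : Omega -> seq (cube n.+3)) (D : Omega -> seq bool -> bool).
Hypothesis tester : nonadaptive_1sided_unateness_tester (1 / 8) q p Q D.
Local Open Scope ring_scope.

Lemma card_rejected_mux w : p w != 0 ->
  (#|[pred i | ~~ D w (map (mux i) (Q w))]| <= size (Q w) ^ 2)%N.
Proof.
case: tester => p_distr _ one_sided _ pw.
apply: leq_trans (card_viol_coords (Q w)).
apply/subset_leq_card/subsetP => i; rewrite !inE; apply: contraR => no_viol.
have agree : map (upper_ext i (mux i) (Q w)) (Q w) = map (mux i) (Q w).
  apply: upper_ext_agree => x y xQ yQ le_xy; apply: mux_mono_no_viol le_xy _.
  apply: contra no_viol => viol.
  by apply/existsP; exists x; apply/existsP; exists y; rewrite xQ yQ.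
rewrite -agree (accepts_on_support p_distr _ pw) //.
exact/one_sided/upper_ext_unate.
Qed.

Lemma sum_reject_prob_mux :
  \sum_(i < n.+3) reject_prob p Q D (mux i) <= (q ^ 2)%:R.
Proof.
case: tester => [[p_ge0 p_sum1] size_le _ _].
rewrite /reject_prob (exchange_big_dep predT) //=.
apply: le_trans (_ : \sum_w p w * (q ^ 2)%:R <= _); last first.
  by rewrite -mulr_suml p_sum1 mul1r.
apply: ler_sum => w _; rewrite sumr_const -[p w *+ _]mulr_natr.
have [->|pw] := eqVneq (p w) 0; first by rewrite !mul0r.
rewrite ler_wpM2l ?ler_nat //; apply: leq_trans (card_rejected_mux pw) _.
by rewrite leq_exp2r ?size_le.
Qed.

Lemma mux_query_lower_bound : (2 * n.+3 <= 3 * q ^ 2)%N.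
Proof.
case: tester => p_distr _ _ far_rejected.
have reject_ge i : 2 / 3 <= reject_prob p Q D (mux i).
  have := far_rejected _ (mux_far_from_unate i).
  have := accept_add_reject Q D p_distr (mux i); lra.
have : (n.+3)%:R * (2 / 3) <= (q ^ 2)%:R :> R.
  rewrite -[in X in X <= _](card_ord n.+3) mulr_natl -sumr_const.
  exact: le_trans (ler_sum _ (fun i _ => reject_ge i)) sum_reject_prob_mux.
by rewrite -(ler_nat R) !natrM; lra.
Qed.

End MuxLowerBound.

Theorem theorem13 :
  exists (eps0 : rat) (c : rat) (d0 : nat),
    (0 < eps0)%R /\ (0 < c)%R /\
    forall (d : nat), (d0 <= d)%N ->
    forall (R : realFieldType) (q : nat) (Omega : finType) (p : Omega -> R)
           (Q : Omega -> seq (cube d)) (D : Omega -> seq bool -> bool),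
      nonadaptive_1sided_unateness_tester eps0 q p Q D ->
      (c * d%:R <= (q ^ 2)%:R)%R.
Proof.
exists (1 / 8)%R, (2 / 3)%R, 3%N; do 2 (split; first lra).
case=> [|[|[|n]]] le3d; [discriminate le3d.. |].
move=> R q Omega p Q D /mux_query_lower_bound.
by rewrite -(ler_nat rat) !natrM; lra.
Qed.
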